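(* Let $Y\subset\mathbb{R}^n$ be open, and let $\omega\colon Y\to\mathbb{R}^n$, $f\colon Y\to\mathbb{R}^n$, $F\colon Y\to\mathbb{R}$, $H\colon Y\to\mathbb{R}^{n\times m}$, $g\colon Y\to\mathbb{R}^m$, $f^{\mathrm{num}}\colon Y\times Y\to\mathbb{R}^n$ be arbitrary with $f^{\mathrm{num}}(u,u)=f(u)$. Then the following are equivalent: (A) there exists $F^{\mathrm{num}}\colon Y\times Y\to\mathbb{R}$ with $F^{\mathrm{num}}(u,u)=F(u)$ such that for all $u_-,u_0,u_+\in Y$, $$\omega(u_0)\cdot\Big(f^{\mathrm{num}}(u_0,u_+)-f^{\mathrm{num}}(u_-,u_0)+\tfrac12 H(u_0)\big(g(u_+)-g(u_0)\big)+\tfrac12 H(u_0)\big(g(u_0)-g(u_-)\big)\Big)\ \ge\ F^{\mathrm{num}}(u_0,u_+)-F^{\mathrm{num}}(u_-,u_0);$$ (B) for all $u_-,u_+\in Y$, $$[\![\omega]\!]\cdot f^{\mathrm{num}}(u_-,u_+)-\{\{\omega\cdot H\}\}\,[\![g]\!]\ \le\ [\![\omega\cdot f-F]\!],$$ where $\omega\cdot H$ denotes the row vector $\omega^TH\in\mathbb{R}^{1\times m}$. Moreover, there exists a consistent $F^{\mathrm{num}}$ with equality in (A) for all triples iff (B) holds with equality for all pairs, and then $$F^{\mathrm{num}}=\{\{F\}\}+\{\{\omega\}\}\cdot f^{\mathrm{num}}-\{\{\omega\cdot f\}\}-\tfrac14[\![\omega\cdot H]\!]\,[\![g]\!].$$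
   Context: For a function $a$ on $Y$ and states $u_\pm$: $\{\{a\}\}=\tfrac12(a(u_-)+a(u_+))$, $[\![a]\!]=a(u_+)-a(u_-)$; numerical fluxes are evaluated at $(u_-,u_+)$. *)

From HB Require Import structures.
From mathcomp Require Import all_boot all_order all_algebra.
From mathcomp Require Import all_classical all_reals all_analysis.
Set Implicit Arguments. Unset Strict Implicit. Unset Printing Implicit Defensive.
Import Order.TTheory GRing.Theory Num.Theory.
Local Open Scope ring_scope.

Definition dotv (R : realType) (n : nat) (a b : 'cV[R]_n) : R := (a^T *m b) 0 0.

Definition wH (R : realType) (n m : nat) (w : 'cV[R]_n) (H : 'M[R]_(n, m)) : 'rV[R]_m :=
  w^T *m H.

Definition rdot (R : realType) (m : nat) (r : 'rV[R]_m) (c : 'cV[R]_m) : R := (r *m c) 0 0.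

(* Split the cell residual of (A) at u0 as P(u0,u+) - Q(u_,u0), where P(u,v) and
   Q(u,v) are the contributions of the interface (u,v) to its left and its right
   cell; both equal q(u) := ω(u)·f(u) on the diagonal.  Choosing u_ = u0 resp.
   u0 = u+ in (A) squeezes any admissible Fnum between Q(u_,u+) - q(u+) + F(u+)
   and P(u_,u+) - q(u_) + F(u_); (B) says precisely that these bounds are
   ordered, and the upper bound is then itself admissible.  In the equality case
   both bounds coincide with Fnum, and their mean is the stated formula. *)
From HB Require Import structures.
From mathcomp Require Import all_boot all_order all_algebra.
From mathcomp Require Import all_classical all_reals all_analysis.
From mathcomp Require Import lra.
Import Order.TTheory GRing.Theory Num.Theory.
Local Open Scope classical_set_scope.
Local Open Scope ring_scope.

Section EntropyFluxes.
Context {R : realFieldType} {T : Type} {Y : set T}.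
Context {P Q : T -> T -> R} {q F : T -> R}.
Hypotheses (P_diag : forall u, Y u -> P u u = q u)
           (Q_diag : forall u, Y u -> Q u u = q u).

Definition left_entropy_flux (a c : T) : R := P a c - q a + F a.

Lemma left_entropy_flux_consistent u : Y u -> left_entropy_flux u u = F u.
Proof. by move=> Yu; rewrite /left_entropy_flux P_diag //; lra. Qed.

Lemma left_entropy_flux_jump a b c :
  left_entropy_flux b c - left_entropy_flux a b
  = P b c - Q a b - ((q b - F b) - (q a - F a) - (Q a b - P a b)).
Proof. rewrite /left_entropy_flux; lra. Qed.

Lemma entropy_stable_flux_bounds {Fn : T -> T -> R} :
  (forall u, Y u -> Fn u u = F u) ->
  (forall a b c, Y a -> Y b -> Y c -> Fn b c - Fn a b <= P b c - Q a b) ->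
  forall a c, Y a -> Y c ->
    Q a c - q c + F c <= Fn a c /\ Fn a c <= left_entropy_flux a c.
Proof.
move=> Fn_diag Fn_stable a c Ya Yc; rewrite /left_entropy_flux.
have := Fn_stable a a c Ya Ya Yc; have := Fn_stable a c c Ya Yc Yc.
rewrite P_diag ?Q_diag ?Fn_diag //; split; lra.
Qed.

Lemma entropy_conservative_flux_sides {Fn : T -> T -> R} :
  (forall u, Y u -> Fn u u = F u) ->
  (forall a b c, Y a -> Y b -> Y c -> P b c - Q a b = Fn b c - Fn a b) ->
  forall a c, Y a -> Y c ->
    Fn a c = Q a c - q c + F c /\ Fn a c = left_entropy_flux a c.
Proof.
move=> Fn_diag Fn_cons a c Ya Yc; rewrite /left_entropy_flux.
have := Fn_cons a a c Ya Ya Yc; have := Fn_cons a c c Ya Yc Yc.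
rewrite P_diag ?Q_diag ?Fn_diag //; split; lra.
Qed.

Lemma entropy_stable_flux_iff :
  (exists Fn : T -> T -> R, (forall u, Y u -> Fn u u = F u) /\
     forall a b c, Y a -> Y b -> Y c -> P b c - Q a b >= Fn b c - Fn a b)
  <-> (forall a c, Y a -> Y c -> Q a c - P a c <= (q c - F c) - (q a - F a)).
Proof.
split=> [[Fn [Fn_diag Fn_stable]] a c Ya Yc | cond].
  have [] := entropy_stable_flux_bounds Fn_diag Fn_stable a c Ya Yc.
  rewrite /left_entropy_flux; lra.
exists left_entropy_flux; split=> [|a b c Ya Yb _]; first exact: left_entropy_flux_consistent.
by rewrite left_entropy_flux_jump; have := cond a b Ya Yb; lra.
Qed.

Lemma entropy_conservative_flux_iff :
  (exists Fn : T -> T -> R, (forall u, Y u -> Fn u u = F u) /\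
     forall a b c, Y a -> Y b -> Y c -> P b c - Q a b = Fn b c - Fn a b)
  <-> (forall a c, Y a -> Y c -> Q a c - P a c = (q c - F c) - (q a - F a)).
Proof.
split=> [[Fn [Fn_diag Fn_cons]] a c Ya Yc | cond].
  have [] := entropy_conservative_flux_sides Fn_diag Fn_cons a c Ya Yc.
  rewrite /left_entropy_flux; lra.
exists left_entropy_flux; split=> [|a b c Ya Yb _]; first exact: left_entropy_flux_consistent.
by rewrite left_entropy_flux_jump cond //; lra.
Qed.

Lemma entropy_conservative_flux_mean {Fn : T -> T -> R} :
  (forall u, Y u -> Fn u u = F u) ->
  (forall a b c, Y a -> Y b -> Y c -> P b c - Q a b = Fn b c - Fn a b) ->
  forall a c, Y a -> Y c ->
    Fn a c = (1 / 2) * (F a + F c) + (1 / 2) * (P a c + Q a c)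
             - (1 / 2) * (q a + q c).
Proof.
move=> Fn_diag Fn_cons a c Ya Yc.
have [] := entropy_conservative_flux_sides Fn_diag Fn_cons a c Ya Yc.
rewrite /left_entropy_flux; lra.
Qed.

End EntropyFluxes.

Section DotProducts.
Variable R : realType.

Lemma dotvDr n (a b c : 'cV[R]_n) : dotv a (b + c) = dotv a b + dotv a c.
Proof. by rewrite /dotv mulmxDr mxE. Qed.

Lemma dotvBr n (a b c : 'cV[R]_n) : dotv a (b - c) = dotv a b - dotv a c.
Proof. by rewrite /dotv mulmxBr !mxE. Qed.

Lemma dotvZr n (a b : 'cV[R]_n) k : dotv a (k *: b) = k * dotv a b.
Proof. by rewrite /dotv -scalemxAr mxE. Qed.

Lemma dotvDl n (a b c : 'cV[R]_n) : dotv (a + b) c = dotv a c + dotv b c.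
Proof. by rewrite /dotv linearD /= mulmxDl mxE. Qed.

Lemma dotvBl n (a b c : 'cV[R]_n) : dotv (a - b) c = dotv a c - dotv b c.
Proof. by rewrite /dotv linearB /= mulmxBl !mxE. Qed.

Lemma dotvZl n (a b : 'cV[R]_n) k : dotv (k *: a) b = k * dotv a b.
Proof. by rewrite /dotv linearZ /= -scalemxAl mxE. Qed.

Lemma rdotDl m (a b : 'rV[R]_m) c : rdot (a + b) c = rdot a c + rdot b c.
Proof. by rewrite /rdot mulmxDl mxE. Qed.

Lemma rdotBl m (a b : 'rV[R]_m) c : rdot (a - b) c = rdot a c - rdot b c.
Proof. by rewrite /rdot mulmxBl !mxE. Qed.

Lemma rdotZl m (a : 'rV[R]_m) c k : rdot (k *: a) c = k * rdot a c.
Proof. by rewrite /rdot -scalemxAl mxE. Qed.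

Lemma rdotBr m (a : 'rV[R]_m) b c : rdot a (b - c) = rdot a b - rdot a c.
Proof. by rewrite /rdot mulmxBr !mxE. Qed.

Lemma dotv_mulmx n m (a : 'cV[R]_n) (M : 'M[R]_(n, m)) x :
  dotv a (M *m x) = rdot (wH a M) x.
Proof. by rewrite /dotv /rdot /wH mulmxA. Qed.

End DotProducts.

Section Fluctuations.
Context {R : realType} {n m : nat} {S : Type}.
Variables (w : S -> 'cV[R]_n) (H : S -> 'M[R]_(n, m)) (g : S -> 'cV[R]_m).
Variable fnum : S -> S -> 'cV[R]_n.

Definition interface_left_part (u v : S) : R :=
  dotv (w u) (fnum u v) + 1 / 2 * rdot (wH (w u) (H u)) (g v - g u).

Definition interface_right_part (u v : S) : R :=
  dotv (w v) (fnum u v) - 1 / 2 * rdot (wH (w v) (H v)) (g v - g u).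

Lemma cell_residual_split a b c :
  dotv (w b) (fnum b c - fnum a b + (1 / 2) *: (H b *m (g c - g b))
                                  + (1 / 2) *: (H b *m (g b - g a)))
  = interface_left_part b c - interface_right_part a b.
Proof.
rewrite 2!dotvDr dotvBr !dotvZr !dotv_mulmx /interface_left_part.
rewrite /interface_right_part !rdotBr; lra.
Qed.

Lemma interface_parts_diag {f : S -> 'cV[R]_n} {u : S} : fnum u u = f u ->
  interface_left_part u u = dotv (w u) (f u) /\
  interface_right_part u u = dotv (w u) (f u).
Proof.
by move=> fnum_uu; rewrite /interface_left_part /interface_right_part fnum_uu subrr
  /rdot mulmx0 mxE; split; lra.
Qed.

Lemma interface_parts_jump a c :
  interface_right_part a c - interface_left_part a c
  = dotv (w c - w a) (fnum a c)
    - rdot ((1 / 2) *: (wH (w a) (H a) + wH (w c) (H c))) (g c - g a).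
Proof.
rewrite /interface_left_part /interface_right_part dotvBl rdotZl rdotDl; lra.
Qed.

Lemma interface_parts_mean a c :
  (1 / 2) * (interface_left_part a c + interface_right_part a c)
  = dotv ((1 / 2) *: (w a + w c)) (fnum a c)
    - (1 / 4) * rdot (wH (w c) (H c) - wH (w a) (H a)) (g c - g a).
Proof.
rewrite /interface_left_part /interface_right_part dotvZl dotvDl rdotBl; lra.
Qed.

End Fluctuations.

Theorem mainTheorem4 (R : realType) (n m : nat) (Y : set 'rV[R]_n)
  (w f : 'rV[R]_n -> 'cV[R]_n) (F : 'rV[R]_n -> R)
  (H : 'rV[R]_n -> 'M[R]_(n, m)) (g : 'rV[R]_n -> 'cV[R]_m)
  (fnum : 'rV[R]_n -> 'rV[R]_n -> 'cV[R]_n) :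
  open (Y : set 'rV[R^o]_n) ->
  (forall u, Y u -> fnum u u = f u) ->
  let lhsA u_ u0 up :=
    dotv (w u0) (fnum u0 up - fnum u_ u0
                 + (1 / 2) *: (H u0 *m (g up - g u0))
                 + (1 / 2) *: (H u0 *m (g u0 - g u_))) in
  let consistent (Fnum : 'rV[R]_n -> 'rV[R]_n -> R) :=
    forall u, Y u -> Fnum u u = F u in
  let lhsB u_ up :=
    dotv (w up - w u_) (fnum u_ up)
    - rdot ((1 / 2) *: (wH (w u_) (H u_) + wH (w up) (H up))) (g up - g u_) in
  let rhsB u_ up :=
    (dotv (w up) (f up) - F up) - (dotv (w u_) (f u_) - F u_) in
  ((exists Fnum, consistent Fnum /\
      forall u_ u0 up, Y u_ -> Y u0 -> Y up ->
        lhsA u_ u0 up >= Fnum u0 up - Fnum u_ u0)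
   <->
   (forall u_ up, Y u_ -> Y up -> lhsB u_ up <= rhsB u_ up))
  /\
  (((exists Fnum, consistent Fnum /\
      forall u_ u0 up, Y u_ -> Y u0 -> Y up ->
        lhsA u_ u0 up = Fnum u0 up - Fnum u_ u0)
    <->
    (forall u_ up, Y u_ -> Y up -> lhsB u_ up = rhsB u_ up))
   /\
   (forall Fnum, consistent Fnum ->
      (forall u_ u0 up, Y u_ -> Y u0 -> Y up ->
         lhsA u_ u0 up = Fnum u0 up - Fnum u_ u0) ->
      forall u_ up, Y u_ -> Y up ->
        Fnum u_ up =
          (1 / 2) * (F u_ + F up)
          + dotv ((1 / 2) *: (w u_ + w up)) (fnum u_ up)
          - (1 / 2) * (dotv (w u_) (f u_) + dotv (w up) (f up))
          - (1 / 4) * rdot (wH (w up) (H up) - wH (w u_) (H u_)) (g up - g u_))).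
Proof.
move=> _ fnum_diag lhsA consistent lhsB rhsB.
pose P := interface_left_part w H g fnum.
pose Q := interface_right_part w H g fnum.
have P_diag u : Y u -> P u u = dotv (w u) (f u).
  by move=> Yu; have [] := interface_parts_diag w H g fnum (fnum_diag u Yu).
have Q_diag u : Y u -> Q u u = dotv (w u) (f u).
  by move=> Yu; have [] := interface_parts_diag w H g fnum (fnum_diag u Yu).
have -> : lhsA = fun a b c => P b c - Q a b.
  by apply/funext=> a; apply/funext=> b; apply/funext=> c; exact: cell_residual_split.
have -> : lhsB = fun a c => Q a c - P a c.
  by apply/funext=> a; apply/funext=> c; rewrite interface_parts_jump.
split; [|split]; first exact: (entropy_stable_flux_iff P_diag Q_diag).
  exact: (entropy_conservative_flux_iff P_diag Q_diag).
move=> Fn Fn_diag Fn_cons a c Ya Yc.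
rewrite (entropy_conservative_flux_mean P_diag Q_diag Fn_diag Fn_cons a c Ya Yc).
rewrite interface_parts_mean; lra.
Qed.
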